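(* Let $q>0$ be transcendental, or $q\ge4$. Then for every real number $a$ there is at most one proper path $\mathbf m$ for $q$ with $c(q,\mathbf m)=a$. In particular, the weight $w_q$ is unique.
   Context: Let $q>0$. For an integer $k\ge0$ and $\mathbf m=(m_0,\dots,m_k)\in\mathbb Z^{k+1}$ put $\mathbf m_j=(m_0,\dots,m_j)$, $0\le j\le k$. Define $c(q,\mathbf m_0)=m_0$ and recursively $c(q,\mathbf m_j)=m_j+\frac{1}{q\,c(q,\mathbf m_{j-1})}$ for $1\le j\le k$, so that $c(q,\mathbf m)=m_k+\cfrac{1}{qm_{k-1}+\cfrac{q}{\ddots+\cfrac{q}{qm_0}}}$. The vector $\mathbf m$ is a path for $q$ (of length $k$) if $c(q,\mathbf m_j)\ne0$ for $0\le j\le k-1$ (all denominators nonzero). A path is proper if $m_j\ne0$ for all $0\le j\le k-1$. The weight of a path is $w_q(\mathbf m)=q^{k/2}\prod_{j=0}^{k-1}|c(q,\mathbf m_j)|$ (and $w_q(\mathbf m)=1$ if $k=0$). The weight $w_q$ is called unique if $w_q(\mathbf m)=w_q(\mathbf n)$ for all paths $\mathbf m,\mathbf n$ for $q$ with $c(q,\mathbf m)=c(q,\mathbf n)$. *)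

From HB Require Import structures.
From mathcomp Require Import all_boot all_order all_algebra.
From mathcomp Require Import reals.
Set Implicit Arguments. Unset Strict Implicit. Unset Printing Implicit Defensive.
Import Order.TTheory GRing.Theory Num.Theory.
Local Open Scope ring_scope.

Section Defs.
Variable R : realType.

Definition algebraic (q : R) : Prop :=
  exists p : {poly rat}, p != 0 /\ root (map_poly ratr p) q.
Definition transcendental (q : R) : Prop := ~ algebraic q.

(* A vector m = (m_0, ..., m_k) is represented as m0 :: ms, k = size ms. *)
Definition cstep (q : R) (c : R) (mj : int) : R := mj%:~R + 1 / (q * c).

Definition cval (q : R) (m0 : int) (ms : seq int) : R :=
  foldl (cstep q) m0%:~R ms.

(* [c(q,m_0); ...; c(q,m_{k-1})] *)
Definition cdenoms (q : R) (m0 : int) (ms : seq int) : seq R :=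
  belast (m0%:~R) (scanl (cstep q) m0%:~R ms).

Definition is_path (q : R) (m0 : int) (ms : seq int) : Prop :=
  all (fun x => x != 0) (cdenoms q m0 ms).

Definition is_proper (m0 : int) (ms : seq int) : Prop :=
  all (fun x => x != 0) (belast m0 ms).

Definition is_proper_path (q : R) (m0 : int) (ms : seq int) : Prop :=
  is_path q m0 ms /\ is_proper m0 ms.

Definition weight (q : R) (m0 : int) (ms : seq int) : R :=
  Num.sqrt q ^+ size ms * \prod_(x <- cdenoms q m0 ms) `|x|.

Definition weight_unique (q : R) : Prop :=
  forall (m0 : int) (ms : seq int) (n0 : int) (ns : seq int),
    is_path q m0 ms -> is_path q n0 ns ->
    cval q m0 ms = cval q n0 ns -> weight q m0 ms = weight q n0 ns.

End Defs.

(* A zero entry m_j = 0 (j < k) can be contracted: the two steps c -> 1/(qc)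
   -> m_(j+1) + c merge m_(j-1) and m_(j+1) into one entry, and the two weight
   factors sqrt q |c| and sqrt q |1/(qc)| cancel.  Hence every path has a proper
   path with the same value and weight, and uniqueness of the weight follows from
   uniqueness of proper paths.
   For q >= 4 all the values c(q,m_j), j < k, of a proper path exceed 1/2 in
   absolute value, so c(q,m) = m_k + e with |e| < 1/2, e = 0 iff k = 0: the last
   entry is the nearest integer to c(q,m), and e = 1/(q c(q,m_(k-1))) determines
   the rest.  For transcendental q, c(q,m) = P(q)/Q(q) with P, Q in Q[X]
   depending only on m, so c(q,m) = c(q,n) is a polynomial identity, which then
   also holds at q = 4. *)

From HB Require Import structures.
From mathcomp Require Import all_boot all_order all_algebra.
From mathcomp Require Import zify.
From mathcomp Require Import reals ring lra.
Set Implicit Arguments. Unset Strict Implicit. Unset Printing Implicit Defensive.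
Import Order.TTheory GRing.Theory Num.Theory.
Local Open Scope ring_scope.

Section Recursion.
Variables (R : realType) (q : R).

Lemma cval_rcons m0 ms x : cval q m0 (rcons ms x) = cstep q (cval q m0 ms) x.
Proof. exact: foldl_rcons. Qed.

Lemma cdenoms_rcons m0 ms x :
  cdenoms q m0 (rcons ms x) = rcons (cdenoms q m0 ms) (cval q m0 ms).
Proof.
rewrite /cdenoms /cval scanl_rcons belast_rcons lastI; congr rcons.
by elim: ms (m0%:~R : R) => //= y ms IH z; rewrite IH.
Qed.

Lemma is_path_rcons m0 ms x :
  is_path q m0 (rcons ms x) <-> is_path q m0 ms /\ cval q m0 ms != 0.
Proof. by rewrite /is_path cdenoms_rcons all_rcons andbC; split=> /andP. Qed.

Lemma is_proper_rcons (m0 : int) ms x :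
  is_proper m0 (rcons ms x) <-> is_proper m0 ms /\ last m0 ms != 0.
Proof. by rewrite /is_proper belast_rcons lastI all_rcons andbC; split=> /andP. Qed.

Lemma weight_rcons m0 ms x :
  weight q m0 (rcons ms x) = weight q m0 ms * (Num.sqrt q * `|cval q m0 ms|).
Proof.
by rewrite /weight cdenoms_rcons size_rcons -cats1 big_cat big_seq1 exprS /=; ring.
Qed.

Lemma cval_shift_last m0 ms (y : int) : exists n0 ns,
  [/\ belast n0 ns = belast m0 ms, cdenoms q n0 ns = cdenoms q m0 ms,
      weight q n0 ns = weight q m0 ms & cval q n0 ns = cval q m0 ms + y%:~R].
Proof.
case/lastP: ms => [|ms x]; first by exists (m0 + y), [::]; rewrite /cval intrD.
exists m0, (rcons ms (x + y)).
rewrite !belast_rcons !cdenoms_rcons !weight_rcons !cval_rcons /cstep intrD.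
by split => //; ring.
Qed.

Lemma cval_rcons_zero m0 ms x : q != 0 -> cval q m0 ms != 0 ->
  cval q m0 (rcons (rcons ms 0) x) = cval q m0 ms + x%:~R.
Proof.
move=> q_neq0 c_neq0; rewrite !cval_rcons /cstep; field.
by rewrite c_neq0 q_neq0.
Qed.

End Recursion.

Section Normalization.
Variables (R : realType) (q : R).
Hypothesis q_gt0 : 0 < q.

Lemma weight_rcons_zero m0 ms x : cval q m0 ms != 0 ->
  weight q m0 (rcons (rcons ms 0) x) = weight q m0 ms.
Proof.
move=> c_neq0; rewrite !weight_rcons cval_rcons /cstep add0r -mulrA.
suff -> : Num.sqrt q * `|cval q m0 ms| * (Num.sqrt q * `|1 / (q * cval q m0 ms)|) = 1.
  by rewrite mulr1.
rewrite mulrACA -expr2 sqr_sqrtr ?ltW // -normrM.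
have -> : cval q m0 ms * (1 / (q * cval q m0 ms)) = q^-1.
  by field; rewrite c_neq0 gt_eqF.
by rewrite normfV gtr0_norm // mulfV ?gt_eqF.
Qed.

Lemma proper_path_rcons_normalize m0 ms x :
  is_proper_path q m0 ms -> cval q m0 ms != 0 -> exists n0 ns,
  [/\ is_proper_path q n0 ns, cval q n0 ns = cval q m0 (rcons ms x)
    & weight q n0 ns = weight q m0 (rcons ms x)].
Proof.
move=> [m_path m_proper] c_neq0.
have [last_neq0|/negPn/eqP last0] := boolP (last m0 ms != 0).
  exists m0, (rcons ms x); split=> //; split.
  - exact/is_path_rcons.
  - exact/is_proper_rcons.
case/lastP: ms m_path m_proper c_neq0 last0 => [|ms y].
  by move=> _ _ /[swap] /= ->; rewrite /cval eqxx.
move=> /is_path_rcons [m_path c'_neq0] /is_proper_rcons [m_proper _] _.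
rewrite last_rcons => ->.
have [n0 [ns [eb ec ew ev]]] := cval_shift_last q m0 ms x.
exists n0, ns; split.
- by split; rewrite /is_path /is_proper ?ec ?eb.
- by rewrite cval_rcons_zero ?(lt0r_neq0 q_gt0).
- by rewrite weight_rcons_zero.
Qed.

Lemma path_normalize m0 ms : is_path q m0 ms -> exists n0 ns,
  [/\ is_proper_path q n0 ns, cval q n0 ns = cval q m0 ms
    & weight q n0 ns = weight q m0 ms].
Proof.
elim/last_ind: ms => [|ms x IH]; first by exists m0, [::].
move=> /is_path_rcons [/IH [n0 [ns [n_proper ec ew]]] c_neq0].
have [|p0 [ps [p_proper ep ew']]] := proper_path_rcons_normalize x n_proper.
  by rewrite ec.
exists p0, ps; split=> //.
- by rewrite ep !cval_rcons ec.
- by rewrite ew' !weight_rcons ec ew.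
Qed.

End Normalization.

Lemma intr_norm_ge1 (R : numDomainType) (m : int) :
  m != 0 -> 1 <= `|m%:~R : R|.
Proof. by rewrite -intr_norm ler1z; lia. Qed.

Lemma int_add_small_inj (R : realFieldType) (x y : int) (e f : R) :
  `|e| < 1 / 2 -> `|f| < 1 / 2 -> x%:~R + e = y%:~R + f -> x = y /\ e = f.
Proof.
move=> e_small f_small exy.
suff xy : x = y by split=> //; move: exy; rewrite xy => /addrI.
have : `|x - y|%:~R < 1 :> R.
  rewrite intr_norm intrB (_ : _ - _ = f - e); last by move: exy; lra.
  by apply: le_lt_trans (ler_normB _ _) _; lra.
rewrite -[1]/(1%:~R) ltr_int; lia.
Qed.

Section AtLeastFour.
Variables (R : realType) (q : R).
Hypothesis q_ge4 : 4 <= q.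

Let q_gt0 : 0 < q := lt_le_trans (ltr0Sn R 3) q_ge4.

Definition cval_tail m0 ms := cval q m0 ms - (last m0 ms)%:~R.

Lemma norm_recip_lt_half (c : R) : 1 / 2 < `|c| -> `|1 / (q * c)| < 1 / 2.
Proof.
move=> c_big.
rewrite normf_div normr1 normrM (gtr0_norm q_gt0) ltr_pdivrMr; last first.
  by rewrite mulr_gt0 //; lra.
have : 2 < q * `|c| by have := q_ge4; nra.
by lra.
Qed.

Lemma norm_cval_gt_half m0 ms : all (fun m : int => m != 0) (m0 :: ms) ->
  1 / 2 < `|cval q m0 ms|.
Proof.
elim/last_ind: ms => [|ms x IH].
  by move=> /andP [/(intr_norm_ge1 R) m0_ge1 _]; rewrite /cval /=; lra.
rewrite -rcons_cons all_rcons cval_rcons => /andP [x_neq0 /IH /norm_recip_lt_half].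
have := intr_norm_ge1 R x_neq0.
have := ler_normB (x%:~R + 1 / (q * cval q m0 ms)) (1 / (q * cval q m0 ms)).
by rewrite /cstep addrK; lra.
Qed.

Lemma proper_is_path m0 ms : is_proper m0 ms -> is_path q m0 ms.
Proof.
elim/last_ind: ms => [|ms x IH] // m_proper.
apply/is_path_rcons; split.
  by apply: IH; case/is_proper_rcons: m_proper.
rewrite -normr_gt0; move: m_proper; rewrite /is_proper belast_rcons.
by move/norm_cval_gt_half; lra.
Qed.

Lemma cval_tail_rcons m0 ms x : cval_tail m0 (rcons ms x) = 1 / (q * cval q m0 ms).
Proof. by rewrite /cval_tail last_rcons cval_rcons /cstep addrC addKr. Qed.

Lemma norm_cval_tail_lt_half m0 ms : is_proper m0 ms -> `|cval_tail m0 ms| < 1 / 2.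
Proof.
case/lastP: ms => [|ms x]; first by rewrite /cval_tail /cval subrr normr0; lra.
rewrite /is_proper belast_rcons cval_tail_rcons.
by move/norm_cval_gt_half/norm_recip_lt_half.
Qed.

Lemma cval_tail_eq0 m0 ms : is_proper m0 ms -> (cval_tail m0 ms == 0) = (ms == [::]).
Proof.
case/lastP: ms => [|ms x]; first by rewrite /cval_tail /cval subrr eqxx.
rewrite /is_proper belast_rcons cval_tail_rcons -size_eq0 size_rcons div1r invr_eq0.
move/norm_cval_gt_half => c_big; apply/negbTE.
by rewrite mulf_neq0 ?(gt_eqF q_gt0) // -normr_gt0; move: c_big; lra.
Qed.

Lemma proper_cval_last_tail m0 ms n0 ns : is_proper m0 ms -> is_proper n0 ns ->
  cval q m0 ms = cval q n0 ns ->
  last m0 ms = last n0 ns /\ cval_tail m0 ms = cval_tail n0 ns.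
Proof.
move=> m_proper n_proper e.
apply: int_add_small_inj; rewrite ?norm_cval_tail_lt_half //.
by rewrite /cval_tail !subrKC.
Qed.

Lemma proper_cval_inj m0 ms n0 ns : is_proper m0 ms -> is_proper n0 ns ->
  cval q m0 ms = cval q n0 ns -> m0 = n0 /\ ms = ns.
Proof.
elim/last_ind: ms n0 ns => [|ms x IH] n0 ns m_proper n_proper e;
  have [e_last e_tail] := proper_cval_last_tail m_proper n_proper e;
  have := cval_tail_eq0 m_proper; rewrite e_tail cval_tail_eq0 //;
  case/lastP: ns n_proper e e_last e_tail => [|ns y] n_proper e e_last e_tail.
- by move: e_last => /= ->.
- by rewrite -!size_eq0 size_rcons.
- by rewrite -!size_eq0 size_rcons.
- move=> _; move: e_last e_tail; rewrite !last_rcons !cval_tail_rcons !div1r => ->.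
  move=> /invr_inj /(mulfI (lt0r_neq0 q_gt0)) e_cval.
  case/is_proper_rcons: m_proper => m_proper _.
  case/is_proper_rcons: n_proper => n_proper _.
  by have [-> ->] := IH n0 ns m_proper n_proper e_cval.
Qed.

End AtLeastFour.

Section RationalFunction.
Variable R : realType.

Definition cpoly_step (pq : {poly rat} * {poly rat}) (m : int) :=
  (m%:~R * 'X * pq.1 + pq.2, 'X * pq.1).

Definition cpoly (m0 : int) (ms : seq int) := foldl cpoly_step (m0%:~R, 1) ms.

Lemma cval_cpoly (x : R) m0 ms : x != 0 -> is_path x m0 ms ->
  (map_poly ratr (cpoly m0 ms).2).[x] != 0 /\
  cval x m0 ms =
    (map_poly ratr (cpoly m0 ms).1).[x] / (map_poly ratr (cpoly m0 ms).2).[x].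
Proof.
move=> x_neq0; elim/last_ind: ms => [|ms y IH].
  by rewrite /= rmorph1 rmorph_int horner_int !hornerE oner_neq0 divr1.
case/is_path_rcons => /IH [Q_neq0 ec] c_neq0.
rewrite /cpoly foldl_rcons -/(cpoly m0 ms) cval_rcons.
move: Q_neq0 ec c_neq0; case: (cpoly m0 ms) => P Q /= Q_neq0 ->.
rewrite mulf_eq0 invr_eq0 (negbTE Q_neq0) orbF => P_neq0.
rewrite !(rmorphD, rmorphM) /= rmorph_int map_polyX !(hornerD, hornerM) hornerX.
rewrite !horner_int mulf_neq0 //; split=> //; rewrite /cstep; field.
by rewrite P_neq0 Q_neq0 x_neq0.
Qed.

Definition cpoly_cross m0 ms n0 ns :=
  (cpoly m0 ms).1 * (cpoly n0 ns).2 - (cpoly n0 ns).1 * (cpoly m0 ms).2.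

Lemma cval_eq_root (x : R) m0 ms n0 ns : x != 0 ->
  is_path x m0 ms -> is_path x n0 ns ->
  cval x m0 ms = cval x n0 ns <-> root (map_poly ratr (cpoly_cross m0 ms n0 ns)) x.
Proof.
move=> x_neq0 /(cval_cpoly x_neq0) [Qm_neq0 ->] /(cval_cpoly x_neq0) [Qn_neq0 ->].
rewrite /root rmorphB !rmorphM /= hornerD hornerN !hornerM subr_eq0 -eqr_div //.
by split=> /eqP.
Qed.

Lemma transcendental_cval_eq (q x : R) m0 ms n0 ns :
  transcendental q -> q != 0 -> x != 0 ->
  is_path q m0 ms -> is_path q n0 ns -> is_path x m0 ms -> is_path x n0 ns ->
  cval q m0 ms = cval q n0 ns -> cval x m0 ms = cval x n0 ns.
Proof.
move=> q_tr q_neq0 x_neq0 mq nq mx nx /(cval_eq_root q_neq0 mq nq) q_root.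
apply/(cval_eq_root x_neq0 mx nx).
suff -> : cpoly_cross m0 ms n0 ns = 0 by rewrite rmorph0 root0.
by apply/eqP/negP => /negP cross_neq0; apply: q_tr; exists (cpoly_cross m0 ms n0 ns).
Qed.

End RationalFunction.

Theorem theorem2 (R : realType) (q : R) :
  0 < q -> (transcendental q \/ 4 <= q) ->
  (forall (a : R) (m0 : int) (ms : seq int) (n0 : int) (ns : seq int),
      is_proper_path q m0 ms -> is_proper_path q n0 ns ->
      cval q m0 ms = a -> cval q n0 ns = a ->
      m0 = n0 /\ ms = ns)
  /\ weight_unique q.
Proof.
move=> q_gt0 q_tr_or_ge4.
have proper_inj a m0 ms n0 ns : is_proper_path q m0 ms -> is_proper_path q n0 ns ->
    cval q m0 ms = a -> cval q n0 ns = a -> m0 = n0 /\ ms = ns.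
  move=> [m_path m_proper] [n_path n_proper] <- /esym e.
  case: q_tr_or_ge4 => [q_tr|q_ge4]; last first.
    exact (proper_cval_inj q_ge4 m_proper n_proper e).
  have four_ge4 : 4 <= 4 :> R := lexx 4.
  apply: (proper_cval_inj four_ge4 m_proper n_proper).
  apply: (transcendental_cval_eq q_tr (lt0r_neq0 q_gt0) _ m_path n_path _ _ e).
  - by rewrite pnatr_eq0.
  - exact: proper_is_path four_ge4 _ _ m_proper.
  - exact: proper_is_path four_ge4 _ _ n_proper.
split=> // m0 ms n0 ns.
move=> /(path_normalize q_gt0) [m1 [ms1 [m1_proper <- <-]]].
move=> /(path_normalize q_gt0) [n1 [ns1 [n1_proper <- <-]]] e.
by have [-> ->] := proper_inj _ _ _ _ _ m1_proper n1_proper e erefl.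
Qed.
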